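(* Let $X$, $A$, $B$, $C$, $Y$, $H$, $V$, $G_+$, $G_-$ be as in the context. Then $G_+$ and $G_-$ are closed and quasi-accretive. In particular, for $G\in\{G_+,G_-\}$ and all $\xi\in D(H)$, $\mathrm{Re}(\xi|G\xi)\geqslant-(\mu_B+|V|)(\xi|\xi)$, where one may take $\mu_B:=0$ if $B$ is symmetric and $\mu_B:=\|B\|$ if $B$ is bounded.
   Context: $(X,\langle\cdot|\cdot\rangle)$ is a nontrivial complex Hilbert space with norm $\|\cdot\|$. $A:D(A)\to X$ is a densely defined self-adjoint linear operator with $\langle\xi|A\xi\rangle\geqslant\varepsilon\langle\xi|\xi\rangle$ for all $\xi\in D(A)$ for some $\varepsilon>0$; $A^{1/2}$ is its positive self-adjoint square root. $B:D(A^{1/2})\to X$ is linear with $\|B\xi\|^2\leqslant a^2\|A^{1/2}\xi\|^2+b^2\|\xi\|^2$ for all $\xi\in D(A^{1/2})$, for some $a\in[0,1)$, $b\in\mathbb{R}$, and $B$ is symmetric or bounded. $C:D(A^{1/2})\to X$ is linear with $\|C\xi\|^2\leqslant c^2\|A^{1/2}\xi\|^2+d^2\|\xi\|^2$ for all $\xi\in D(A^{1/2})$, for some real $c,d$. $Y:=D(A^{1/2})\times X$ with inner product $(\xi|\eta):=\langle A^{1/2}\xi_1|A^{1/2}\eta_1\rangle+\langle\xi_2|\eta_2\rangle$; $|V|$ is the operator norm of $V$ on $Y$. $H:D(A)\times D(A^{1/2})\to Y$, $H\xi:=(-i\xi_2,iA\xi_1)$; $\hat B:D(H)\to Y$, $\hat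 B\xi:=(0,-B\xi_2)$; $V:Y\to Y$, $V\xi:=(0,iC\xi_1)$ (a bounded operator); $G_+:=-i(H+\hat B+V)$, $G_-:=i(H+\hat B+V)$ with domain $D(H)$. An operator $G$ is quasi-accretive if there is $\omega\in\mathbb{R}$ with $\mathrm{Re}(\xi|G\xi)\geqslant-\omega(\xi|\xi)$ for all $\xi\in D(G)$. *)

From HB Require Import structures.
From mathcomp Require Import all_boot all_order all_algebra.
From mathcomp Require Import complex.
From mathcomp Require Import boolp classical_sets reals.

Set Implicit Arguments.
Unset Strict Implicit.
Unset Printing Implicit Defensive.
Import Order.TTheory GRing.Theory Num.Theory.
Local Open Scope ring_scope.
Local Open Scope classical_set_scope.

Section Hilbert.
Variable R : realType.
Local Notation C := (R[i]).

Definition iC : C := Complex 0 1.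

(* Abstract complex pre-Hilbert space: a vector space V over C with a
   sesquilinear form, antilinear in the first, linear in the second argument
   (physics convention <xi|A xi>). *)
Definition is_inner_product (V : lmodType C) (ip : V -> V -> C) : Prop :=
  [/\ forall (a : C) (x y z : V), ip x (a *: y + z) = a * ip x y + ip x z,
      forall x y : V, ip y x = conjc (ip x y),
      forall x : V, 0 <= ip x x
    & forall x : V, ip x x = 0 -> x = 0].

Definition ipnorm (V : lmodType C) (ip : V -> V -> C) (x : V) : R :=
  Num.sqrt (complex.Re (ip x x)).

Definition ip_cvg (V : lmodType C) (ip : V -> V -> C) (u : nat -> V) (x : V)
  : Prop :=
  forall e : R, 0 < e -> exists N : nat, forall n, (N <= n)%N ->
    ipnorm ip (u n - x) < e.

Definition ip_cauchy (V : lmodType C) (ip : V -> V -> C) (u : nat -> V)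
  : Prop :=
  forall e : R, 0 < e -> exists N : nat, forall n m, (N <= n)%N -> (N <= m)%N ->
    ipnorm ip (u n - u m) < e.

Definition ip_complete (V : lmodType C) (ip : V -> V -> C) : Prop :=
  forall u : nat -> V, ip_cauchy ip u -> exists x, ip_cvg ip u x.

(* Partially defined operators are pairs (domain D, map T); only the values
   of T on D matter. *)
Definition lin_on (V W : lmodType C) (D : V -> Prop) (T : V -> W) : Prop :=
  [/\ D 0,
      forall (a : C) x y, D x -> D y -> D (a *: x + y)
    & forall (a : C) x y, D x -> D y -> T (a *: x + y) = a *: T x + T y].

Definition dense_in (V : lmodType C) (ip : V -> V -> C) (D : V -> Prop)
  : Prop :=
  forall (x : V) (e : R), 0 < e -> exists y, D y /\ ipnorm ip (x - y) < e.

Definition symmetric_on (V : lmodType C) (ip : V -> V -> C)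
  (D : V -> Prop) (T : V -> V) : Prop :=
  forall x y, D x -> D y -> ip (T x) y = ip x (T y).

Definition adj_dom (V : lmodType C) (ip : V -> V -> C)
  (D : V -> Prop) (T : V -> V) (y : V) : Prop :=
  exists z : V, forall x, D x -> ip (T x) y = ip x z.

(* densely defined self-adjoint linear operator: T symmetric and
   D(T^* ) included in D(T) (so that T^* = T) *)
Definition self_adjoint (V : lmodType C) (ip : V -> V -> C)
  (D : V -> Prop) (T : V -> V) : Prop :=
  [/\ lin_on D T, dense_in ip D, symmetric_on ip D T
    & forall y, adj_dom ip D T y -> D y].

Definition is_pos_sqrt (V : lmodType C) (ip : V -> V -> C)
  (DA : V -> Prop) (A : V -> V) (DS : V -> Prop) (S : V -> V) : Prop :=
  [/\ self_adjoint ip DS S,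
      forall x, DS x -> 0 <= ip x (S x),
      forall x, DA x <-> (DS x /\ DS (S x))
    & forall x, DA x -> A x = S (S x)].

Definition bounded_on (V W : lmodType C) (ipV : V -> V -> C)
  (ipW : W -> W -> C) (D : V -> Prop) (T : V -> W) : Prop :=
  exists M : R, forall x, D x -> ipnorm ipW (T x) <= M * ipnorm ipV x.

Definition opnorm (V W : lmodType C) (ipV : V -> V -> C)
  (ipW : W -> W -> C) (D : V -> Prop) (T : V -> W) : R :=
  sup [set ipnorm ipW (T x) | x in [set x | D x /\ ipnorm ipV x <= 1]].

Definition closed_op (V : lmodType C) (ip : V -> V -> C)
  (inY : V -> Prop) (D : V -> Prop) (G : V -> V) : Prop :=
  forall (u : nat -> V) (x y : V),
    (forall n, D (u n)) -> inY x -> inY y ->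
    ip_cvg ip u x -> ip_cvg ip (fun n => G (u n)) y ->
    D x /\ G x = y.

Definition quasi_accretive (V : lmodType C) (ip : V -> V -> C)
  (D : V -> Prop) (G : V -> V) : Prop :=
  exists w : R, forall x, D x -> complex.Re (ip x (G x)) >= - w * complex.Re (ip x x).

Section Energy.
Variable X : lmodType C.
Variable ip : X -> X -> C.
Variables (DA : X -> Prop) (A : X -> X) (DS : X -> Prop) (S : X -> X).
Variables (B Cop : X -> X).

(* carrier X * X; Y is the subset with first component in D(A^{1/2}) *)
Definition inY (xi : X * X) : Prop := DS xi.1.
Definition Yip (xi eta : X * X) : C := ip (S xi.1) (S eta.1) + ip xi.2 eta.2.

Definition DH (xi : X * X) : Prop := DA xi.1 /\ DS xi.2.
Definition Hop (xi : X * X) : X * X := (- (iC *: xi.2), iC *: A xi.1).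
Definition Bhat (xi : X * X) : X * X := (0, - B xi.2).
Definition Vop (xi : X * X) : X * X := (0, iC *: Cop xi.1).
Definition Gplus (xi : X * X) : X * X :=
  (- iC) *: (Hop xi + Bhat xi + Vop xi).
Definition Gminus (xi : X * X) : X * X :=
  iC *: (Hop xi + Bhat xi + Vop xi).
End Energy.

End Hilbert.

(* For xi in D(H), the real part of (xi | G+ xi) collapses, because
   <A^{1/2} xi1 | A^{1/2} xi2> cancels against its conjugate, to
   Re <xi2 | C xi1> - Im <xi2 | B xi2>.  The second term vanishes for symmetric
   B and is at most |B| |xi2|^2 for bounded B; the first is at most
   |V| |A^{1/2} xi1| |xi2| <= |V| (xi | xi).  G- = - G+ flips the sign.
   Closedness: convergence in Y of u and of G+ u controls A^{1/2} of both
   components of u.  Since A >= eps makes A onto (by a best-approximation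
   argument), A^{1/2} is bounded below as well, so both components also converge
   in X, B and C converge by their relative bounds, and closedness of the
   self-adjoint A concludes. *)

From HB Require Import structures.
From mathcomp Require Import all_boot all_order all_algebra.
From mathcomp Require Import complex.
From mathcomp Require Import boolp classical_sets reals.
From mathcomp Require Import ring lra.
Set Implicit Arguments.
Unset Strict Implicit.
Unset Printing Implicit Defensive.
Import Order.TTheory GRing.Theory Num.Theory.
Local Open Scope ring_scope.
Local Open Scope complex_scope.
Local Notation Re := complex.Re.
Local Notation Im := complex.Im.

Section ComplexParts.
Variable R : realType.
Implicit Types z w : R[i].

Lemma Re_add z w : Re (z + w) = Re z + Re w. Proof. by case: z; case: w. Qed.
Lemma Im_add z w : Im (z + w) = Im z + Im w. Proof. by case: z; case: w. Qed.
Lemma Re_opp z : Re (- z) = - Re z. Proof. by case: z. Qed.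
Lemma Im_opp z : Im (- z) = - Im z. Proof. by case: z. Qed.
Lemma Re_mul z w : Re (z * w) = Re z * Re w - Im z * Im w.
Proof. by case: z; case: w. Qed.
Lemma Re_conjc z : Re (z^*) = Re z. Proof. by case: z. Qed.
Lemma Im_conjc z : Im (z^*) = - Im z. Proof. by case: z. Qed.
Lemma Im_Re_conji z : Im z = Re ('i^* * z). Proof. case: z => ? ? /=; lra. Qed.
Lemma complex_eq0 z : Re z = 0 -> Im z = 0 -> z = 0.
Proof. by case: z => ? ? /= -> ->. Qed.

End ComplexParts.

Section RealLemmas.
Variable R : realFieldType.

Lemma quadratic_ge0_discr_le (p q r : R) : 0 <= p ->
  (forall t, 0 <= t ^+ 2 * p + 2 * t * r + q) -> r ^+ 2 <= p * q.
Proof.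
move=> p_ge0 hquad; have q_ge0 : 0 <= q by have := hquad 0; lra.
have [p0|p_neq0] := eqVneq p 0.
  subst p; have [->|r_neq0] := eqVneq r 0; first by rewrite expr0n mul0r.
  have := hquad (- (q + 1) / (2 * r)).
  have -> : 2 * (- (q + 1) / (2 * r)) * r = - (q + 1) by field.
  lra.
have p_gt0 : 0 < p by rewrite lt_def p_neq0.
have := hquad (- r / p).
have -> : (- r / p) ^+ 2 * p + 2 * (- r / p) * r + q = q - r ^+ 2 / p by field.
by rewrite subr_ge0 ler_pdivrMr // mulrC.
Qed.

Lemma le_add_sqr_mul (u v : R) : u * v <= u ^+ 2 + v ^+ 2.
Proof. nra. Qed.

Lemma le_of_sqr_le (u v : R) : 0 <= v -> u ^+ 2 <= v ^+ 2 -> u <= v.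
Proof. nra. Qed.

Lemma lt_of_sqr_lt (u v : R) : 0 <= v -> u ^+ 2 < v ^+ 2 -> u < v.
Proof. nra. Qed.

Lemma mulr_le_cancel (p k v : R) :
  0 <= p -> 0 <= v -> p * (k * p) <= p * v -> k * p <= v.
Proof.
move=> p_ge0 v_ge0; have [->|p_neq0] := eqVneq p 0; first by rewrite !mulr0.
by rewrite ler_pM2l // lt_def p_neq0.
Qed.

Lemma le_abs_lincomb_of_sqr (al be p q r : R) : 0 <= p -> 0 <= q ->
  r ^+ 2 <= al ^+ 2 * p ^+ 2 + be ^+ 2 * q ^+ 2 -> r <= `|al| * p + `|be| * q.
Proof.
move=> p_ge0 q_ge0 hr; apply: le_of_sqr_le; first by rewrite addr_ge0 ?mulr_ge0.
rewrite sqrrD !exprMn !real_normK ?num_real //.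
have : 0 <= `|al| * p * (`|be| * q) by rewrite !mulr_ge0.
lra.
Qed.

Definition null_seq (r : nat -> R) :=
  forall e, 0 < e -> exists N, forall n, (N <= n)%N -> r n < e.

Lemma null_seq_le (p r : nat -> R) :
  null_seq p -> (forall n, r n <= p n) -> null_seq r.
Proof.
move=> hp hrp e e_gt0; have [N hN] := hp e e_gt0.
by exists N => n /hN; apply: le_lt_trans.
Qed.

Lemma null_seqD (p q : nat -> R) :
  null_seq p -> null_seq q -> null_seq (fun n => p n + q n).
Proof.
move=> hp hq e e_gt0; have e2_gt0 : 0 < e / 2 by rewrite divr_gt0.
have [N1 hN1] := hp _ e2_gt0; have [N2 hN2] := hq _ e2_gt0.
exists (maxn N1 N2) => n; rewrite geq_max => /andP[/hN1 h1 /hN2 h2]; lra.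
Qed.

Lemma null_seqZ (k : R) (p : nat -> R) :
  0 <= k -> null_seq p -> null_seq (fun n => k * p n).
Proof.
move=> k_ge0 hp e e_gt0; have ek_gt0 : 0 < e / (k + 1) by rewrite divr_gt0 ?ltr_wpDl.
have [N hN] := hp _ ek_gt0; exists N => n /hN hpn.
have : k * p n <= k * (e / (k + 1)) by rewrite ler_wpM2l // ltW.
have : k * (e / (k + 1)) < e by rewrite mulrA ltr_pdivrMr ?ltr_wpDl //; lra.
lra.
Qed.

Lemma null_seq_eq0 (p : nat -> R) (r : R) :
  null_seq p -> (forall n, `|r| <= p n) -> r = 0.
Proof.
move=> hp hrp; apply/normr0_eq0/eqP; rewrite eq_le normr_ge0 andbT leNgt.
by apply/negP => /hp [N /(_ N (leqnn N))]; have := hrp N; lra.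
Qed.

Lemma le_of_null_seq (p : nat -> R) (r s : R) :
  null_seq p -> (forall n, r <= s + p n) -> r <= s.
Proof.
move=> hp hrs; rewrite leNgt; apply/negP; rewrite -subr_gt0 => /hp [N].
by move/(_ N (leqnn N)); have := hrs N; lra.
Qed.

End RealLemmas.

Lemma null_seq_harmonic (R : archiRealFieldType) :
  null_seq (fun n : nat => (n.+1%:R : R)^-1).
Proof.
move=> e e_gt0; have einv_ge0 : 0 <= e^-1 by rewrite invr_ge0 ltW.
exists (Num.bound e^-1) => n hn.
rewrite -[e]invrK ltf_pV2 ?posrE ?ltr0Sn ?invr_gt0 //.
by apply: lt_le_trans (archi_boundP einv_ge0) _; rewrite ler_nat leqW.
Qed.

Definition subspace (K : pzRingType) (V : lmodType K) (M : V -> Prop) :=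
  M 0 /\ forall a x y, M x -> M y -> M (a *: x + y).

Definition range_on (K : pzRingType) (V W : lmodType K) (D : V -> Prop)
  (T : V -> W) (y : W) := exists2 x, D x & T x = y.

Section DomainLinear.
Variable R : realType.
Variables (V W : lmodType R[i]) (D : V -> Prop) (T : V -> W).
Hypothesis HT : lin_on D T.

Lemma lin_dom0 : D 0. Proof. by case: HT. Qed.

Lemma lin_domD x y : D x -> D y -> D (x + y).
Proof. by case: HT => _ Dcomb _ Dx Dy; rewrite -[x]scale1r; apply: Dcomb. Qed.

Lemma lin_domZ a x : D x -> D (a *: x).
Proof. by case: HT => D0 Dcomb _ Dx; rewrite -[_ *: x]addr0; apply: Dcomb. Qed.

Lemma lin_domN x : D x -> D (- x).
Proof. by rewrite -scaleN1r; apply: lin_domZ. Qed.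

Lemma lin_domB x y : D x -> D y -> D (x - y).
Proof. by move=> Dx /lin_domN; apply: lin_domD. Qed.

Lemma lin_op0 : T 0 = 0.
Proof.
case: HT => D0 _ lin; apply: (addrI (T 0)).
by have := lin 1 0 0 D0 D0; rewrite !scale1r addr0 => <-; rewrite addr0.
Qed.

Lemma lin_opD x y : D x -> D y -> T (x + y) = T x + T y.
Proof. by case: HT => _ _ lin Dx Dy; rewrite -[x]scale1r lin // !scale1r. Qed.

Lemma lin_opZ a x : D x -> T (a *: x) = a *: T x.
Proof. by case: HT => D0 _ lin Dx; rewrite -[_ *: x]addr0 lin // lin_op0 addr0. Qed.

Lemma lin_opN x : D x -> T (- x) = - T x.
Proof. by move=> Dx; rewrite -scaleN1r lin_opZ // scaleN1r. Qed.

Lemma lin_opB x y : D x -> D y -> T (x - y) = T x - T y.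
Proof. by move=> Dx Dy; rewrite lin_opD ?lin_opN //; apply: lin_domN. Qed.

Lemma lin_range_subspace : subspace (range_on D T).
Proof.
split; first by exists 0; [apply: lin_dom0 | apply: lin_op0].
move=> a _ _ [x Dx <-] [y Dy <-]; exists (a *: x + y).
  by case: HT => _ Dcomb _; apply: Dcomb.
by rewrite lin_opD ?lin_opZ //; apply: lin_domZ.
Qed.

End DomainLinear.

Section InnerProduct.
Variable R : realType.
Variable X : lmodType R[i].
Variable ip : X -> X -> R[i].
Hypothesis Hip : is_inner_product ip.
Local Notation nrm := (ipnorm ip).
Implicit Types x y z : X.

Lemma ipDr x y z : ip x (y + z) = ip x y + ip x z.
Proof. by case: Hip => linr _ _ _; rewrite -[y in LHS]scale1r linr mul1r. Qed.

Lemma ip0r x : ip x 0 = 0.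
Proof. by apply: (addrI (ip x 0)); rewrite -ipDr !addr0. Qed.

Lemma ipZr a x y : ip x (a *: y) = a * ip x y.
Proof. by case: Hip => linr _ _ _; rewrite -[a *: y]addr0 linr ip0r addr0. Qed.

Lemma ipNr x y : ip x (- y) = - ip x y.
Proof. by rewrite -scaleN1r ipZr mulN1r. Qed.

Lemma ipBr x y z : ip x (y - z) = ip x y - ip x z.
Proof. by rewrite ipDr ipNr. Qed.

Lemma ipC x y : ip y x = (ip x y)^*.
Proof. by case: Hip. Qed.

Lemma ipDl x y z : ip (y + z) x = ip y x + ip z x.
Proof. by rewrite !(ipC x) ipDr rmorphD. Qed.

Lemma ipZl a x y : ip (a *: y) x = a^* * ip y x.
Proof. by rewrite !(ipC x) ipZr rmorphM. Qed.

Lemma ipNl x y : ip (- y) x = - ip y x.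
Proof. by rewrite !(ipC x) ipNr rmorphN. Qed.

Lemma ipBl x y z : ip (y - z) x = ip y x - ip z x.
Proof. by rewrite ipDl ipNl. Qed.

Lemma Re_ipC x y : Re (ip y x) = Re (ip x y).
Proof. by rewrite ipC Re_conjc. Qed.

Definition sqnorm x := Re (ip x x).

Lemma ip_self x : ip x x = (sqnorm x)%:C.
Proof.
case: Hip => _ _ ge0 _; have := ger0_Im (ge0 x); rewrite /sqnorm.
by case: (ip x x) => ? ? /= ->.
Qed.

Lemma sqnorm_ge0 x : 0 <= sqnorm x.
Proof. by case: Hip => _ _ ge0 _; have := ge0 x; rewrite ip_self ler0c. Qed.

Lemma sqnorm_eq0 x : sqnorm x = 0 -> x = 0.
Proof. by case: Hip => _ _ _ def0 hx; apply: def0; rewrite ip_self hx. Qed.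

Lemma sqnormD x y : sqnorm (x + y) = sqnorm x + sqnorm y + 2 * Re (ip x y).
Proof. rewrite /sqnorm ipDl !ipDr !Re_add (Re_ipC x y); lra. Qed.

Lemma sqnormZ a x : sqnorm (a *: x) = (Re a ^+ 2 + Im a ^+ 2) * sqnorm x.
Proof. rewrite /sqnorm ipZl ipZr ip_self; case: a => ? ? /=; lra. Qed.

Lemma sqnormN x : sqnorm (- x) = sqnorm x.
Proof. by rewrite /sqnorm ipNl ipNr opprK. Qed.

Lemma sqnorm_parallelogram x y :
  sqnorm (x + y) + sqnorm (x - y) = 2 * sqnorm x + 2 * sqnorm y.
Proof. rewrite !sqnormD sqnormN ipNr Re_opp; lra. Qed.

Lemma Re_ip_sqr_le x y : Re (ip x y) ^+ 2 <= sqnorm x * sqnorm y.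
Proof.
apply: quadratic_ge0_discr_le (sqnorm_ge0 x) _ => t.
have := sqnorm_ge0 (t%:C *: x + y).
rewrite sqnormD sqnormZ ipZl Re_mul /= expr0n /= addr0 oppr0 mul0r subr0; lra.
Qed.

Lemma ipnorm_ge0 x : 0 <= nrm x.
Proof. exact: sqrtr_ge0. Qed.

Lemma ipnorm_sqr x : nrm x ^+ 2 = sqnorm x.
Proof. by rewrite sqr_sqrtr // sqnorm_ge0. Qed.

Lemma ipnorm_eq0 x : nrm x = 0 -> x = 0.
Proof. by move=> hx; apply: sqnorm_eq0; rewrite -ipnorm_sqr hx expr0n. Qed.

Lemma ipnormN x : nrm (- x) = nrm x.
Proof. by rewrite /ipnorm -!/(sqnorm _) sqnormN. Qed.

Lemma ipnormBC x y : nrm (x - y) = nrm (y - x).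
Proof. by rewrite -ipnormN opprB. Qed.

Lemma ipnormZ a x : nrm (a *: x) = Num.sqrt (Re a ^+ 2 + Im a ^+ 2) * nrm x.
Proof. by rewrite /ipnorm -!/(sqnorm _) sqnormZ sqrtrM // addr_ge0 ?sqr_ge0. Qed.

Lemma ipnormZr (t : R) x : 0 <= t -> nrm (t%:C *: x) = t * nrm x.
Proof. by move=> t_ge0; rewrite ipnormZ /= expr0n addr0 sqrtr_sqr ger0_norm. Qed.

Lemma ipnorm_i x : nrm ('i *: x) = nrm x.
Proof. by rewrite ipnormZ /= expr0n expr1n add0r sqrtr1 mul1r. Qed.

Lemma normRe_ip_le x y : `|Re (ip x y)| <= nrm x * nrm y.
Proof.
apply: le_of_sqr_le; first by rewrite mulr_ge0 ?ipnorm_ge0.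
by rewrite real_normK ?num_real // exprMn !ipnorm_sqr Re_ip_sqr_le.
Qed.

Lemma normIm_ip_le x y : `|Im (ip x y)| <= nrm x * nrm y.
Proof. by rewrite Im_Re_conji -ipZl -(ipnorm_i x) normRe_ip_le. Qed.

Lemma ipnormD_le x y : nrm (x + y) <= nrm x + nrm y.
Proof.
apply: le_of_sqr_le; first by rewrite addr_ge0 ?ipnorm_ge0.
rewrite ipnorm_sqr sqnormD sqrrD !ipnorm_sqr.
have := normRe_ip_le x y; have := ler_norm (Re (ip x y)); lra.
Qed.

Lemma orthogonal_dense (D : X -> Prop) v :
  dense_in ip D -> (forall w, D w -> ip w v = 0) -> v = 0.
Proof.
move=> Ddense orth; apply: ipnorm_eq0; apply/eqP/negPn/negP => v_neq0.
have v_gt0 : 0 < nrm v by rewrite lt_def v_neq0 ipnorm_ge0.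
have [w [Dw w_close]] := Ddense v _ (divr_gt0 v_gt0 (ltr0n _ 2)).
have v_Re : sqnorm v = Re (ip (v - w) v) by rewrite ipBl (orth w Dw) subr0.
have := normRe_ip_le (v - w) v; have := ler_norm (Re (ip (v - w) v)).
rewrite -v_Re -ipnorm_sqr.
have : nrm (v - w) * nrm v < nrm v / 2 * nrm v by rewrite ltr_pM2r.
nra.
Qed.

Lemma ip_cvgE u x : ip_cvg ip u x = null_seq (fun n => nrm (u n - x)).
Proof. by []. Qed.

Lemma ip_cvg_unique u x y : ip_cvg ip u x -> ip_cvg ip u y -> x = y.
Proof.
move=> ux uy; apply/eqP; rewrite -subr_eq0; apply/eqP/ipnorm_eq0.
apply: null_seq_eq0 (null_seqD ux uy) _ => n.
have -> : x - y = (x - u n) + (u n - y) by rewrite addrA subrK.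
by rewrite ger0_norm ?ipnorm_ge0 // (ipnormBC (u n) x) ipnormD_le.
Qed.

Lemma ip_cvgD u v x y : ip_cvg ip u x -> ip_cvg ip v y ->
  ip_cvg ip (fun n => u n + v n) (x + y).
Proof.
move=> ux vy; apply: null_seq_le (null_seqD ux vy) _ => n.
by rewrite opprD addrACA ipnormD_le.
Qed.

Lemma ip_cvgZ a u x : ip_cvg ip u x -> ip_cvg ip (fun n => a *: u n) (a *: x).
Proof.
move=> ux; apply: null_seq_le (null_seqZ (sqrtr_ge0 _) ux) _ => n.
by rewrite -scalerBr ipnormZ.
Qed.

Lemma ip_cvgN u x : ip_cvg ip u x -> ip_cvg ip (fun n => - u n) (- x).
Proof.
move=> ux; rewrite ip_cvgE; under eq_fun do rewrite -opprD ipnormN.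
exact: ux.
Qed.

Lemma ip_cvgB u v x y : ip_cvg ip u x -> ip_cvg ip v y ->
  ip_cvg ip (fun n => u n - v n) (x - y).
Proof. by move=> ux /ip_cvgN; apply: ip_cvgD. Qed.

Lemma ip_eq_of_cvg a b u v x z : (forall n, ip a (u n) = ip b (v n)) ->
  ip_cvg ip u x -> ip_cvg ip v z -> ip a x = ip b z.
Proof.
move=> huv ux vz; apply/eqP; rewrite -subr_eq0; apply/eqP.
have gap n : ip a x - ip b z = ip a (x - u n) - ip b (z - v n).
  by rewrite !ipBr huv; ring.
have gap_null : null_seq (fun n => nrm a * nrm (u n - x) + nrm b * nrm (v n - z)).
  by apply: null_seqD; apply: null_seqZ; rewrite ?ipnorm_ge0.
apply: complex_eq0; apply: (null_seq_eq0 gap_null) => n;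
  rewrite (gap n) ?(Re_add, Re_opp, Im_add, Im_opp); apply: le_trans (ler_normB _ _) _;
  rewrite (ipnormBC (u n)) (ipnormBC (v n)); apply: lerD;
  by [apply: normRe_ip_le | apply: normIm_ip_le].
Qed.

Lemma cauchy_of_sqnorm_le u (p : nat -> R) : null_seq p ->
  (forall n k, sqnorm (u n - u k) <= p n + p k) -> ip_cauchy ip u.
Proof.
move=> p_null hu e e_gt0.
have [N hN] := p_null _ (divr_gt0 (exprn_gt0 2 e_gt0) (ltr0n _ 2)).
exists N => n k /hN pn /hN pk; apply: lt_of_sqr_lt; first exact: ltW.
by rewrite ipnorm_sqr; apply: le_lt_trans (hu n k) _; lra.
Qed.

Section BestApproximation.
Variable M : X -> Prop.
Hypothesis M_subspace : subspace M.
Hypothesis M_complete : forall u, (forall n, M (u n)) -> ip_cauchy ip u ->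
  exists2 m, M m & ip_cvg ip u m.

Lemma subspaceD u v : M u -> M v -> M (u + v).
Proof. by case: M_subspace => _ comb Mu Mv; rewrite -[u]scale1r; apply: comb. Qed.

Lemma subspaceZ a u : M u -> M (a *: u).
Proof. by case: M_subspace => M0 comb Mu; rewrite -[_ *: u]addr0; apply: comb. Qed.

Lemma sqnorm_sub_le_midpoint x m1 m2 d : 0 <= d ->
  d <= nrm (x - 2^-1 *: (m1 + m2)) ->
  sqnorm (m1 - m2) <= 2 * sqnorm (x - m1) + 2 * sqnorm (x - m2) - 4 * d ^+ 2.
Proof.
move=> d_ge0 d_le; set c := x - 2^-1 *: (m1 + m2).
have half2 : (2^-1 + 2^-1 : R[i]) = 1 by field.
have mid : (x - m1) + (x - m2) = c + c.
  by rewrite [LHS]addrACA [RHS]addrACA -!opprD -scalerDl half2 scale1r.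
have := sqnorm_parallelogram (x - m1) (x - m2).
have diff : (x - m1) - (x - m2) = - (m1 - m2).
  by rewrite opprB addrC addrA subrK opprB.
rewrite mid diff sqnormN sqnormD.
have : d ^+ 2 <= nrm c ^+ 2 by rewrite ler_pXn2r ?nnegrE ?ipnorm_ge0.
rewrite ipnorm_sqr /sqnorm; lra.
Qed.

Lemma best_approximation x :
  exists2 m, M m & forall m', M m' -> nrm (x - m) <= nrm (x - m').
Proof.
pose dists r := exists2 m, M m & nrm (x - m) = r.
have M0 : M 0 by case: M_subspace.
have dists0 : dists (nrm (x - 0)) by exists 0.
have dists_ge0 : lbound dists 0 by move=> _ [m _ <-]; apply: ipnorm_ge0.
have dists_inf : has_inf dists by split; [exists (nrm (x - 0)) | exists 0].
pose d := inf dists.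
have d_le m : M m -> d <= nrm (x - m).
  by move=> Mm; apply: (ge_inf dists_inf.2); exists m.
have d_ge0 : 0 <= d.
  by apply: lb_le_inf; [exists (nrm (x - 0)) |].
pose h (n : nat) : R := n.+1%:R^-1.
have h_gt0 n : 0 < h n by rewrite invr_gt0 ltr0Sn.
have h_le1 n : h n <= 1 by rewrite invr_le1 ?ler1n ?ltr0Sn ?unitfE ?pnatr_eq0.
have near n : exists m, M m /\ nrm (x - m) < d + h n.
  by have [_ [m Mm <-] ?] := inf_adherent (h_gt0 n) dists_inf; exists m.
have [ms hms] := choice (fun n => near n).
have ms_in n : M (ms n) by case: (hms n).
have ms_cauchy : ip_cauchy ip ms.
  apply: (@cauchy_of_sqnorm_le _ (fun n => 2 * (2 * d + 1) * h n)).
    by apply: null_seqZ (@null_seq_harmonic R); lra.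
  move=> n k; have [_ dn] := hms n; have [_ dk] := hms k.
  have dmid := d_le _ (subspaceZ 2^-1 (subspaceD (ms_in n) (ms_in k))).
  have := sqnorm_sub_le_midpoint d_ge0 dmid; rewrite -!ipnorm_sqr.
  have := d_le _ (ms_in n); have := d_le _ (ms_in k).
  have := h_gt0 n; have := h_gt0 k; have := h_le1 n; have := h_le1 k.
  nra.
have [m Mm ms_cvg] := M_complete ms_in ms_cauchy.
exists m => // m' Mm'; apply: le_trans (d_le _ Mm').
apply: (le_of_null_seq (null_seqD (@null_seq_harmonic R) ms_cvg)) => n.
have [_ dn] := hms n.
have -> : x - m = (x - ms n) + (ms n - m) by rewrite addrA subrK.
by apply: le_trans (ipnormD_le _ _) _; rewrite addrA lerD2r ltW.
Qed.

Lemma best_approximation_orthogonal x m : M m ->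
  (forall m', M m' -> nrm (x - m) <= nrm (x - m')) ->
  forall v, M v -> ip v (x - m) = 0.
Proof.
move=> Mm m_best.
have Re_orth v : M v -> Re (ip (x - m) v) = 0.
  move=> Mv; apply/eqP; rewrite -sqrf_eq0 eq_le sqr_ge0 andbT.
  rewrite -[0](mulr0 (sqnorm v)) -sqrrN.
  apply: quadratic_ge0_discr_le (sqnorm_ge0 v) _ => t.
  have := m_best _ (subspaceD Mm (subspaceZ t%:C Mv)).
  rewrite opprD addrA -ler_sqr ?nnegrE ?ipnorm_ge0 // !ipnorm_sqr.
  rewrite [sqnorm (_ - _ - _)]sqnormD sqnormN sqnormZ ipNr ipZr Re_opp Re_mul /=.
  rewrite expr0n addr0 mul0r subr0.
  lra.
move=> v Mv; rewrite ipC; apply/eqP; rewrite conjc_eq0; apply/eqP.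
apply: complex_eq0; first exact: Re_orth.
have := Re_orth _ (subspaceZ 'i Mv); rewrite ipZr Re_mul /= mul0r sub0r mul1r.
lra.
Qed.

End BestApproximation.

Lemma symmetric_Im_ip (D : X -> Prop) (T : X -> X) y :
  symmetric_on ip D T -> D y -> Im (ip y (T y)) = 0.
Proof.
move=> Tsym Dy; have := congr1 (@complex.Im R) (ipC (T y) y).
rewrite Tsym // Im_conjc; lra.
Qed.

Section SelfAdjoint.
Variables (D : X -> Prop) (T : X -> X).
Hypothesis T_sa : self_adjoint ip D T.

Lemma self_adjoint_closed u x z : (forall n, D (u n)) ->
  ip_cvg ip u x -> ip_cvg ip (fun n => T (u n)) z -> D x /\ T x = z.
Proof.
case: T_sa => _ Ddense Tsym Tadj Du ux Tuz.
have adj w : D w -> ip (T w) x = ip w z.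
  by move=> Dw; apply: (ip_eq_of_cvg _ ux Tuz) => n; apply: Tsym.
have Dx : D x by apply: Tadj; exists z.
split => //; apply/eqP; rewrite -subr_eq0; apply/eqP.
by apply: (orthogonal_dense Ddense) => w Dw; rewrite ipBr -Tsym // adj // subrr.
Qed.

Section Coercive.
Hypothesis X_complete : ip_complete ip.
Variable eps : R.
Hypothesis eps_gt0 : 0 < eps.
Hypothesis T_coercive : forall x, D x -> eps * sqnorm x <= Re (ip x (T x)).

Lemma coercive_lower_bound x : D x -> eps * nrm x <= nrm (T x).
Proof.
move=> Dx; apply: (mulr_le_cancel (ipnorm_ge0 x) (ipnorm_ge0 _)).
rewrite mulrCA -expr2 ipnorm_sqr; apply: le_trans (T_coercive Dx) _.
exact: le_trans (ler_norm _) (normRe_ip_le _ _).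
Qed.

Lemma coercive_range_complete u : (forall n, range_on D T (u n)) ->
  ip_cauchy ip u -> exists2 y, range_on D T y & ip_cvg ip u y.
Proof.
move=> u_range u_cauchy; have T_lin : lin_on D T by case: T_sa.
pose ws n := s2val (cid2 (u_range n)).
have Dws n : D (ws n) := s2valP (cid2 (u_range n)).
have Tws : (fun n => T (ws n)) = u.
  by apply: funext => n; exact: s2valP' (cid2 (u_range n)).
have ws_cauchy : ip_cauchy ip ws.
  move=> e e_gt0; have [N hN] := u_cauchy _ (mulr_gt0 eps_gt0 e_gt0).
  exists N => n k hn hk; rewrite -(ltr_pM2l eps_gt0).
  apply: le_lt_trans (hN n k hn hk); rewrite -Tws -(lin_opB T_lin (Dws n) (Dws k)).
  exact/coercive_lower_bound/(lin_domB T_lin).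
have [w ws_w] := X_complete ws_cauchy; have [y u_y] := X_complete u_cauchy.
have [Dw Twy] : D w /\ T w = y by apply: self_adjoint_closed Dws ws_w _; rewrite Tws.
by exists y => //; exists w.
Qed.

(* The best approximation [m] of [x] in the range leaves [x - m] orthogonal to
   the range, i.e. in the domain of the adjoint, where coercivity forces it to
   vanish. *)
Lemma coercive_surjective x : range_on D T x.
Proof.
have T_lin : lin_on D T by case: T_sa.
have range_sub := lin_range_subspace T_lin.
have [m m_range m_best] := best_approximation range_sub coercive_range_complete x.
have orth w : D w -> ip (T w) (x - m) = 0.
  by move=> Dw; apply: (best_approximation_orthogonal range_sub m_range m_best); exists w.
have Dxm : D (x - m).
  by case: T_sa => _ _ _ Tadj; apply: Tadj; exists 0 => w Dw; rewrite orth // ip0r.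
have : eps * sqnorm (x - m) <= 0.
  by have := T_coercive Dxm; rewrite ipC orth // rmorph0.
rewrite pmulr_rle0 // => xm_le0.
have /sqnorm_eq0/eqP : sqnorm (x - m) = 0 by apply/eqP; rewrite eq_le xm_le0 sqnorm_ge0.
by rewrite subr_eq0 => /eqP ->.
Qed.

End Coercive.
End SelfAdjoint.

Section RelativelyBounded.
Variables (D : X -> Prop) (S T : X -> X).
Hypothesis T_lin : lin_on D T.
Variables al be : R.
Hypothesis T_relbound : forall x, D x ->
  nrm (T x) ^+ 2 <= al ^+ 2 * nrm (S x) ^+ 2 + be ^+ 2 * nrm x ^+ 2.

Lemma relbounded_cvg u x : (forall n, D (u n)) -> D x ->
  null_seq (fun n => nrm (S (u n - x))) -> ip_cvg ip u x ->
  ip_cvg ip (fun n => T (u n)) (T x).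
Proof.
move=> Du Dx Su ux.
have := null_seqD (null_seqZ (normr_ge0 al) Su) (null_seqZ (normr_ge0 be) ux).
move/null_seq_le; apply => n; rewrite -(lin_opB T_lin) //.
apply: le_abs_lincomb_of_sqr; rewrite ?ipnorm_ge0 //.
exact/T_relbound/(lin_domB T_lin).
Qed.

End RelativelyBounded.

Section PositiveSquareRoot.
Hypothesis X_complete : ip_complete ip.
Variables (DA : X -> Prop) (A : X -> X) (DS : X -> Prop) (S : X -> X).
Hypothesis A_sa : self_adjoint ip DA A.
Hypothesis S_sqrt : is_pos_sqrt ip DA A DS S.
Variable eps : R.
Hypothesis eps_gt0 : 0 < eps.
Hypothesis A_coercive : forall x, DA x -> eps * sqnorm x <= Re (ip x (A x)).

Lemma pos_sqrt_lin : lin_on DS S.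
Proof. by case: S_sqrt => -[]. Qed.

Lemma pos_sqrt_sym : symmetric_on ip DS S.
Proof. by case: S_sqrt => -[]. Qed.

Lemma pos_sqrt_dom x : DA x -> DS x /\ DS (S x).
Proof. by case: S_sqrt => _ _ /(_ x) []. Qed.

Lemma pos_sqrt_sqr x : DA x -> A x = S (S x).
Proof. by case: S_sqrt => _ _ _; apply. Qed.

Lemma pos_sqrt_sqnorm x : DA x -> sqnorm (S x) = Re (ip x (A x)).
Proof.
move=> DAx; have [DSx DSSx] := pos_sqrt_dom DAx.
by rewrite pos_sqrt_sqr // /sqnorm (pos_sqrt_sym DSx DSSx).
Qed.

(* Write x = A w = S s with s = S w; two Cauchy-Schwarz estimates and the
   coercivity of A then transfer the lower bound from A to S. *)
Lemma pos_sqrt_coercive x : DS x -> eps * sqnorm x <= sqnorm (S x).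
Proof.
move=> DSx; have [w DAw Awx] := coercive_surjective A_sa X_complete eps_gt0 A_coercive x.
have [DSw DSs] := pos_sqrt_dom DAw; set s := S w in DSs *.
have Ss : S s = x by rewrite -pos_sqrt_sqr.
have x_sq : sqnorm x = Re (ip (S x) s).
  by rewrite /sqnorm -{2}Ss -(pos_sqrt_sym DSx DSs).
have s_sq : sqnorm s = Re (ip w x) by rewrite pos_sqrt_sqnorm // Awx.
have w_le : eps * sqnorm w <= sqnorm s by rewrite s_sq -Awx; apply: A_coercive.
have cs_x := Re_ip_sqr_le (S x) s; rewrite -x_sq in cs_x.
have cs_s := Re_ip_sqr_le w x; rewrite -s_sq in cs_s.
have s_le : eps * sqnorm s <= sqnorm x.
  apply: mulr_le_cancel (sqnorm_ge0 _) (sqnorm_ge0 _) _.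
  have := ler_wpM2r (sqnorm_ge0 x) w_le; have := ler_wpM2l (ltW eps_gt0) cs_s.
  nra.
apply: mulr_le_cancel (sqnorm_ge0 _) (sqnorm_ge0 _) _.
have := ler_wpM2l (sqnorm_ge0 (S x)) s_le; have := ler_wpM2l (ltW eps_gt0) cs_x.
nra.
Qed.

Lemma pos_sqrt_norm_le x : DS x -> nrm x <= Num.sqrt eps^-1 * nrm (S x).
Proof.
move=> DSx; have einv_ge0 : 0 <= eps^-1 by rewrite invr_ge0 ltW.
rewrite /ipnorm -sqrtrM // ler_sqrt ?mulr_ge0 ?sqnorm_ge0 //.
by rewrite mulrC ler_pdivlMr // mulrC pos_sqrt_coercive.
Qed.

Lemma pos_sqrt_cvg u x : (forall n, DS (u n)) -> DS x ->
  null_seq (fun n => nrm (S (u n - x))) -> ip_cvg ip u x.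
Proof.
move=> DSu DSx Su; rewrite ip_cvgE.
apply: null_seq_le (null_seqZ (sqrtr_ge0 eps^-1) Su) _ => n.
exact/pos_sqrt_norm_le/(lin_domB pos_sqrt_lin).
Qed.

End PositiveSquareRoot.
End InnerProduct.

Section OperatorNorm.
Variable R : realType.
Variables (V W : lmodType R[i]) (ipV : V -> V -> R[i]) (ipW : W -> W -> R[i]).
Variables (D : V -> Prop) (T : V -> W).
Hypothesis T_lin : lin_on D T.
Hypothesis ipV_homo : forall (t : R) x, 0 <= t -> D x ->
  ipnorm ipV (t%:C *: x) = t * ipnorm ipV x.
Hypothesis ipW_homo : forall (t : R) x, 0 <= t -> D x ->
  ipnorm ipW (t%:C *: T x) = t * ipnorm ipW (T x).
Variable K : R.
Hypothesis T_bounded : forall x, D x -> ipnorm ipV x <= 1 -> ipnorm ipW (T x) <= K.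
Local Notation opT := (opnorm ipV ipW D T).

Lemma opnorm_ub x : D x -> ipnorm ipV x <= 1 -> ipnorm ipW (T x) <= opT.
Proof.
move=> Dx x_le1; apply: ub_le_sup; last by exists x.
by exists K => _ [y [Dy y_le1] <-]; apply: T_bounded.
Qed.

Lemma opnorm_ge0 : 0 <= opT.
Proof.
have D0 := lin_dom0 T_lin; apply: le_trans (opnorm_ub D0 _); first exact: sqrtr_ge0.
by rewrite -(scaler0 _ (0 : R)%:C) ipV_homo // mul0r ler01.
Qed.

(* For [ipnorm ipV x = 0] all multiples of [x] lie in the unit ball, which
   forces [T x] to have norm 0. *)
Lemma le_opnorm x : D x -> ipnorm ipW (T x) <= opT * ipnorm ipV x.
Proof.
move=> Dx.
have scaled t : 0 <= t -> t * ipnorm ipV x <= 1 -> t * ipnorm ipW (T x) <= opT.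
  move=> t_ge0 tx_le1; rewrite -ipW_homo // -(lin_opZ T_lin) //.
  by apply: opnorm_ub; [apply: (lin_domZ T_lin) | rewrite ipV_homo].
have Tx_ge0 : 0 <= ipnorm ipW (T x) by apply: sqrtr_ge0.
have [x0|x_neq0] := eqVneq (ipnorm ipV x) 0.
  rewrite x0 mulr0 leNgt; apply/negP => Tx_gt0.
  have t_ge0 : 0 <= (opT + 1) / ipnorm ipW (T x).
    by rewrite divr_ge0 ?addr_ge0 ?opnorm_ge0.
  have := scaled _ t_ge0; rewrite x0 mulr0 ler01 divfK ?gt_eqF // => /(_ isT).
  lra.
have x_gt0 : 0 < ipnorm ipV x by rewrite lt_def x_neq0 sqrtr_ge0.
have xinv_ge0 : 0 <= (ipnorm ipV x)^-1 by rewrite invr_ge0 ltW.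
have := scaled _ xinv_ge0; rewrite mulVf // lexx => /(_ isT).
by rewrite mulrC ler_pdivrMr.
Qed.

End OperatorNorm.

Section BoundedOperator.
Variable R : realType.
Variable X : lmodType R[i].
Variable ip : X -> X -> R[i].
Hypothesis Hip : is_inner_product ip.
Variables (D : X -> Prop) (T : X -> X).
Hypothesis T_lin : lin_on D T.
Hypothesis T_bounded : bounded_on ip ip D T.

Lemma bounded_unit_ball :
  exists K, forall x, D x -> ipnorm ip x <= 1 -> ipnorm ip (T x) <= K.
Proof.
case: T_bounded => M TM; exists `|M| => x Dx x_le1; apply: le_trans (TM x Dx) _.
by apply: le_trans (ler_norm _) _; rewrite normrM (ger0_norm (ipnorm_ge0 ip x)) ler_piMr.
Qed.

Let ip_homo (t : R) x : 0 <= t -> ipnorm ip (t%:C *: x) = t * ipnorm ip x.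
Proof. exact: ipnormZr. Qed.

Lemma bounded_opnorm_ge0 : 0 <= opnorm ip ip D T.
Proof.
have [K TK] := bounded_unit_ball.
exact: (opnorm_ge0 T_lin (fun t x t_ge0 _ => ip_homo x t_ge0) TK).
Qed.

Lemma bounded_le_opnorm x : D x -> ipnorm ip (T x) <= opnorm ip ip D T * ipnorm ip x.
Proof.
have [K TK] := bounded_unit_ball.
exact: (le_opnorm T_lin (fun t x t_ge0 _ => ip_homo x t_ge0)
  (fun t x t_ge0 _ => ip_homo (T x) t_ge0) TK).
Qed.

End BoundedOperator.

Section EnergySpace.
Variable R : realType.
Variable X : lmodType R[i].
Variable ip : X -> X -> R[i].
Hypothesis Hip : is_inner_product ip.
Hypothesis X_complete : ip_complete ip.
Variables (DA : X -> Prop) (A : X -> X) (DS : X -> Prop) (S : X -> X).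
Hypothesis A_sa : self_adjoint ip DA A.
Hypothesis S_sqrt : is_pos_sqrt ip DA A DS S.
Variable eps : R.
Hypothesis eps_gt0 : 0 < eps.
Hypothesis A_coercive : forall x, DA x -> eps * sqnorm ip x <= Re (ip x (A x)).
Variables (B Cop : X -> X) (a b c d : R).
Hypothesis B_lin : lin_on DS B.
Hypothesis B_relbound : forall x, DS x ->
  ipnorm ip (B x) ^+ 2 <= a ^+ 2 * ipnorm ip (S x) ^+ 2 + b ^+ 2 * ipnorm ip x ^+ 2.
Hypothesis C_lin : lin_on DS Cop.
Hypothesis C_relbound : forall x, DS x ->
  ipnorm ip (Cop x) ^+ 2 <= c ^+ 2 * ipnorm ip (S x) ^+ 2 + d ^+ 2 * ipnorm ip x ^+ 2.

Local Notation nrm := (ipnorm ip).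
Local Notation Yp := (Yip ip S).
Local Notation Gp := (Gplus A B Cop).
Local Notation Gm := (Gminus A B Cop).
Local Notation normV := (opnorm Yp Yp (inY DS) (Vop Cop)).

Let S_lin : lin_on DS S := pos_sqrt_lin S_sqrt.
Let S_norm_le := pos_sqrt_norm_le Hip X_complete A_sa S_sqrt eps_gt0 A_coercive.
Let S_cvg := pos_sqrt_cvg Hip X_complete A_sa S_sqrt eps_gt0 A_coercive.

Lemma ReYip_self z : Re (Yp z z) = sqnorm ip (S z.1) + sqnorm ip z.2.
Proof. by rewrite /Yip Re_add. Qed.

Lemma Ynorm_ge_fst z : nrm (S z.1) <= ipnorm Yp z.
Proof. by rewrite /ipnorm ReYip_self ler_sqrt ?lerDl ?addr_ge0 ?sqnorm_ge0. Qed.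

Lemma Ynorm_ge_snd z : nrm z.2 <= ipnorm Yp z.
Proof. by rewrite /ipnorm ReYip_self ler_sqrt ?lerDr ?addr_ge0 ?sqnorm_ge0. Qed.

Lemma Ycvg_fst u xi : ip_cvg Yp u xi ->
  null_seq (fun n => nrm (S ((u n).1 - xi.1))).
Proof.
rewrite ip_cvgE => uxi; apply: null_seq_le uxi _ => n.
exact: (Ynorm_ge_fst (u n - xi)).
Qed.

Lemma Ycvg_snd u xi : ip_cvg Yp u xi -> ip_cvg ip (fun n => (u n).2) xi.2.
Proof.
rewrite !ip_cvgE => uxi; apply: null_seq_le uxi _ => n.
exact: (Ynorm_ge_snd (u n - xi)).
Qed.

Lemma YnormN z : inY DS z -> ipnorm Yp (- z) = ipnorm Yp z.
Proof.
move=> DSz; rewrite /ipnorm /Yip /= (lin_opN S_lin) //.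
by rewrite !(ipNl Hip, ipNr Hip) !opprK.
Qed.

Lemma YnormZr (t : R) z : 0 <= t -> inY DS z ->
  ipnorm Yp (t%:C *: z) = t * ipnorm Yp z.
Proof.
move=> t_ge0 DSz; rewrite /ipnorm /Yip /= !Re_add (lin_opZ S_lin) //.
rewrite -/(sqnorm ip (t%:C *: S z.1)) -/(sqnorm ip (t%:C *: z.2)) !(sqnormZ Hip) /=.
rewrite expr0n addr0 -mulrDr sqrtrM ?sqr_ge0 // sqrtr_sqr ger0_norm //.
Qed.

Lemma GplusE xi : Gp xi = (- xi.2, A xi.1 + 'i *: B xi.2 + Cop xi.1).
Proof.
have i2 : - 'i * 'i = 1 :> R[i] by rewrite /=; congr Complex; lra.
rewrite /Gplus /Hop /Bhat /Vop /iC; congr pair => /=.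
  by rewrite !addr0 scalerN scalerA i2 scale1r.
by rewrite !scalerDr !scalerA i2 !scale1r scalerN scaleNr opprK.
Qed.

Lemma GminusE xi : Gm xi = - Gp xi.
Proof. by rewrite /Gminus /Gplus scaleNr opprK. Qed.

Lemma Gplus_closed : closed_op Yp (inY DS) (DH DA DS) Gp.
Proof.
move=> u xi eta DHu DSxi1 DSeta1 uxi Guxi.
have DAu1 n : DA (u n).1 by case: (DHu n).
have DSu1 n : DS (u n).1 := (pos_sqrt_dom S_sqrt (DAu1 n)).1.
have DSu2 n : DS (u n).2 by case: (DHu n).
have Su1 := Ycvg_fst uxi.
have u1_cvg := S_cvg DSu1 DSxi1 Su1.
have Cu1 := relbounded_cvg C_lin C_relbound DSu1 DSxi1 Su1 u1_cvg.
have u2_cvg := Ycvg_snd uxi.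
have Su2' : null_seq (fun n => nrm (S (- (u n).2 - eta.1))).
  by apply: null_seq_le (Ycvg_fst Guxi) _ => n; rewrite GplusE.
have DSnu2 n : DS (- (u n).2) by apply: (lin_domN S_lin).
have nu2_cvg := S_cvg DSnu2 DSeta1 Su2'.
have eta1 : eta.1 = - xi.2 := ip_cvg_unique Hip nu2_cvg (ip_cvgN Hip u2_cvg).
have DSxi2 : DS xi.2 by rewrite -[xi.2]opprK -eta1; apply: (lin_domN S_lin).
have Su2 : null_seq (fun n => nrm (S ((u n).2 - xi.2))).
  apply: null_seq_le Su2' _ => n.
  have -> : - (u n).2 - eta.1 = - ((u n).2 - xi.2) by rewrite eta1 opprK opprB addrC.
  by rewrite (lin_opN S_lin) ?(ipnormN Hip) //; apply: (lin_domB S_lin).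
have Bu2 := relbounded_cvg B_lin B_relbound DSu2 DSxi2 Su2 u2_cvg.
have Au1 : ip_cvg ip (fun n => A (u n).1) (eta.2 - Cop xi.1 - 'i *: B xi.2).
  have -> : (fun n => A (u n).1) =
      (fun n => (Gp (u n)).2 - Cop (u n).1 - 'i *: B (u n).2).
    by apply: funext => n; rewrite GplusE /= !addrK.
  exact: (ip_cvgB Hip (ip_cvgB Hip (Ycvg_snd Guxi) Cu1) (@ip_cvgZ _ _ _ Hip 'i _ _ Bu2)).
have [DAxi1 Axi1] := self_adjoint_closed Hip A_sa DAu1 u1_cvg Au1.
by split => //; rewrite GplusE Axi1 !subrK [RHS]surjective_pairing eta1.
Qed.

Lemma Gminus_closed : closed_op Yp (inY DS) (DH DA DS) Gm.
Proof.
move=> u xi eta DHu DSxi1 DSeta1 uxi Guxi.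
have DSneta1 : inY DS (- eta) by apply: (lin_domN S_lin).
have Gp_cvg : ip_cvg Yp (fun n => Gp (u n)) (- eta).
  move: Guxi; rewrite !ip_cvgE => Guxi; apply: null_seq_le Guxi _ => n.
  rewrite opprK GminusE -opprD YnormN //.
  rewrite /inY GplusE /=; apply: (lin_domD S_lin) => //.
  by apply: (lin_domN S_lin); case: (DHu n).
have [DHxi Gpxi] := Gplus_closed DHu DSxi1 DSneta1 uxi Gp_cvg.
by split => //; rewrite GminusE Gpxi opprK.
Qed.

Lemma ReYip_Gplus xi : DH DA DS xi ->
  Re (Yp xi (Gp xi)) = Re (ip xi.2 (Cop xi.1)) - Im (ip xi.2 (B xi.2)).
Proof.
case=> DAxi1 DSxi2; have [_ DSSxi1] := pos_sqrt_dom S_sqrt DAxi1.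
rewrite /Yip GplusE /= (lin_opN S_lin) // (ipNr Hip) !(ipDr Hip) (ipZr Hip).
rewrite (pos_sqrt_sqr S_sqrt DAxi1) -(pos_sqrt_sym S_sqrt DSxi2 DSSxi1).
rewrite !Re_add Re_opp Re_mul /= (Re_ipC Hip (S xi.1)); lra.
Qed.

Lemma ReYip_Gminus xi : DH DA DS xi -> Re (Yp xi (Gm xi)) = - Re (Yp xi (Gp xi)).
Proof.
case=> _ DSxi2; have DSG1 : DS (Gp xi).1 by rewrite GplusE; apply: (lin_domN S_lin).
rewrite GminusE /Yip -[(- Gp xi).1]/(- (Gp xi).1) -[(- Gp xi).2]/(- (Gp xi).2).
by rewrite (lin_opN S_lin DSG1) !(ipNr Hip) !Re_add !Re_opp opprD.
Qed.

Lemma Ynorm_fst x : ipnorm Yp (x, 0) = nrm (S x).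
Proof. by rewrite /ipnorm /Yip /= (ip0r Hip) addr0. Qed.

Lemma Ynorm_Vop z : ipnorm Yp (Vop Cop z) = nrm (Cop z.1).
Proof.
rewrite /ipnorm /Yip /= (lin_op0 S_lin) (ip0r Hip) add0r.
exact: (ipnorm_i Hip).
Qed.

Lemma Vop_lin : lin_on (inY DS) (Vop Cop).
Proof.
split; first exact: (lin_dom0 S_lin).
  by case: S_lin => _ Scomb _ k z w; apply: Scomb.
move=> k z w DSz DSw; rewrite /Vop /= (lin_opD C_lin) ?(lin_opZ C_lin) //.
  by congr pair => /=; rewrite ?scaler0 ?addr0 // scalerDr !scalerA mulrC.
exact: (lin_domZ C_lin).
Qed.

Lemma Vop_bounded z : inY DS z -> ipnorm Yp z <= 1 ->
  ipnorm Yp (Vop Cop z) <= `|c| + `|d| * Num.sqrt eps^-1.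
Proof.
move=> DSz z_le1; rewrite Ynorm_Vop.
have Sz_le1 : nrm (S z.1) <= 1 := le_trans (Ynorm_ge_fst z) z_le1.
have := le_abs_lincomb_of_sqr (ipnorm_ge0 _ _) (ipnorm_ge0 _ _) (C_relbound DSz).
move/le_trans; apply.
apply: lerD; first by rewrite ler_piMr.
apply: ler_wpM2l => //; apply: le_trans (S_norm_le DSz) _.
by rewrite ler_piMr // sqrtr_ge0.
Qed.

Let Y_homo (t : R) z : 0 <= t -> inY DS z -> ipnorm Yp (t%:C *: z) = t * ipnorm Yp z.
Proof. exact: YnormZr. Qed.

Let Vop_homo (t : R) z : 0 <= t -> inY DS z ->
  ipnorm Yp (t%:C *: Vop Cop z) = t * ipnorm Yp (Vop Cop z).
Proof. by move=> t_ge0 _; apply: YnormZr => //; apply: (lin_dom0 S_lin). Qed.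

Lemma normV_ge0 : 0 <= normV.
Proof. exact: (opnorm_ge0 Vop_lin Y_homo Vop_bounded). Qed.

Lemma Cop_le_normV x : DS x -> nrm (Cop x) <= normV * nrm (S x).
Proof.
move=> DSx; have DSx0 : inY DS (x, 0) by [].
have := le_opnorm Vop_lin Y_homo Vop_homo Vop_bounded DSx0.
by rewrite Ynorm_Vop Ynorm_fst.
Qed.

Lemma Re_ip_Cop_le xi : DH DA DS xi ->
  `|Re (ip xi.2 (Cop xi.1))| <= normV * Re (Yp xi xi).
Proof.
case=> DAxi1 _; have [DSxi1 _] := pos_sqrt_dom S_sqrt DAxi1.
rewrite ReYip_self; apply: le_trans (normRe_ip_le Hip _ _) _.
apply: le_trans (ler_wpM2l (ipnorm_ge0 _ _) (Cop_le_normV DSxi1)) _.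
rewrite mulrCA ler_wpM2l ?normV_ge0 // -!(ipnorm_sqr Hip) addrC.
exact: le_add_sqr_mul.
Qed.

Lemma Im_ip_B_le y : bounded_on ip ip DS B -> DS y ->
  `|Im (ip y (B y))| <= opnorm ip ip DS B * sqnorm ip y.
Proof.
move=> Bbnd DSy; apply: le_trans (normIm_ip_le Hip _ _) _.
rewrite -(ipnorm_sqr Hip) expr2 mulrCA ler_wpM2l ?ipnorm_ge0 //.
exact: (bounded_le_opnorm Hip B_lin Bbnd).
Qed.

Lemma ReYip_Gpm_ge G xi : G = Gp \/ G = Gm -> DH DA DS xi ->
  - (`|Im (ip xi.2 (B xi.2))| + normV * Re (Yp xi xi)) <= Re (Yp xi (G xi)).
Proof.
move=> hG DHxi; have := Re_ip_Cop_le DHxi; rewrite ler_norml => /andP[C_lb C_ub].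
have /andP[B_lb B_ub] :
    - `|Im (ip xi.2 (B xi.2))| <= Im (ip xi.2 (B xi.2)) <= `|Im (ip xi.2 (B xi.2))|.
  by rewrite -ler_norml.
by case: hG => ->; rewrite ?ReYip_Gminus // ReYip_Gplus //; lra.
Qed.

Lemma Gpm_lower_bound_sym G xi : symmetric_on ip DS B -> G = Gp \/ G = Gm ->
  DH DA DS xi -> - normV * Re (Yp xi xi) <= Re (Yp xi (G xi)).
Proof.
move=> Bsym hG DHxi; apply: le_trans (ReYip_Gpm_ge hG DHxi).
by case: DHxi => _ DSxi2; rewrite (symmetric_Im_ip Hip Bsym DSxi2) normr0 add0r mulNr.
Qed.

Lemma Gpm_lower_bound_bounded G xi : bounded_on ip ip DS B -> G = Gp \/ G = Gm ->
  DH DA DS xi -> - (opnorm ip ip DS B + normV) * Re (Yp xi xi) <= Re (Yp xi (G xi)).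
Proof.
move=> Bbnd hG DHxi; apply: le_trans (ReYip_Gpm_ge hG DHxi).
case: DHxi => _ DSxi2; have := Im_ip_B_le Bbnd DSxi2.
have := bounded_opnorm_ge0 Hip B_lin Bbnd; have := sqnorm_ge0 Hip (S xi.1).
rewrite ReYip_self; nra.
Qed.

Lemma Gpm_quasi_accretive G : symmetric_on ip DS B \/ bounded_on ip ip DS B ->
  G = Gp \/ G = Gm -> quasi_accretive Yp (DH DA DS) G.
Proof.
move=> [Bsym|Bbnd] hG; [exists normV | exists (opnorm ip ip DS B + normV)] => xi DHxi.
  exact: Gpm_lower_bound_sym.
exact: Gpm_lower_bound_bounded.
Qed.

End EnergySpace.

Theorem lemma6 (R : realType) (X : lmodType R[i]) (ip : X -> X -> R[i])
  (Hip : is_inner_product ip) (Hcomplete : ip_complete ip)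
  (Hnontriv : exists x : X, x != 0)
  (DA : X -> Prop) (A : X -> X) (HA : self_adjoint ip DA A)
  (eps : R) (Heps : 0 < eps)
  (HAeps : forall x, DA x -> Complex eps 0 * ip x x <= ip x (A x))
  (DS : X -> Prop) (S : X -> X) (HS : is_pos_sqrt ip DA A DS S)
  (B : X -> X) (HBlin : lin_on DS B) (a b : R) (Ha : 0 <= a < 1)
  (HBbound : forall x, DS x ->
     ipnorm ip (B x) ^+ 2 <= a ^+ 2 * ipnorm ip (S x) ^+ 2 + b ^+ 2 * ipnorm ip x ^+ 2)
  (HBsb : symmetric_on ip DS B \/ bounded_on ip ip DS B)
  (Cop : X -> X) (HClin : lin_on DS Cop) (c d : R)
  (HCbound : forall x, DS x ->
     ipnorm ip (Cop x) ^+ 2 <= c ^+ 2 * ipnorm ip (S x) ^+ 2 + d ^+ 2 * ipnorm ip x ^+ 2) :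
  let Yp := Yip ip S in
  let normV := opnorm Yp Yp (inY DS) (Vop Cop) in
  [/\ closed_op Yp (inY DS) (DH DA DS) (Gplus A B Cop),
      closed_op Yp (inY DS) (DH DA DS) (Gminus A B Cop),
      quasi_accretive Yp (DH DA DS) (Gplus A B Cop),
      quasi_accretive Yp (DH DA DS) (Gminus A B Cop)
    & forall G : X * X -> X * X,
        G = Gplus A B Cop \/ G = Gminus A B Cop ->
        forall xi, DH DA DS xi ->
          (symmetric_on ip DS B ->
             complex.Re (Yp xi (G xi)) >= - normV * complex.Re (Yp xi xi))
          /\ (bounded_on ip ip DS B ->
             complex.Re (Yp xi (G xi))
               >= - (opnorm ip ip DS B + normV) * complex.Re (Yp xi xi))].
Proof.
move=> Yp normV.
have A_coercive x : DA x -> eps * sqnorm ip x <= Re (ip x (A x)).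
  by move/HAeps; rewrite lecE Re_mul /= mul0r subr0 => /andP[].
split.
- exact: (Gplus_closed Hip Hcomplete HA HS Heps A_coercive HBlin HBbound HClin HCbound).
- exact: (Gminus_closed Hip Hcomplete HA HS Heps A_coercive HBlin HBbound HClin HCbound).
- exact: (Gpm_quasi_accretive Hip Hcomplete HA HS Heps A_coercive HBlin HClin HCbound
    HBsb (or_introl erefl)).
- exact: (Gpm_quasi_accretive Hip Hcomplete HA HS Heps A_coercive HBlin HClin HCbound
    HBsb (or_intror erefl)).
- move=> G hG xi DHxi; split=> hB.
    exact: (Gpm_lower_bound_sym Hip Hcomplete HA HS Heps A_coercive HClin HCbound
      hB hG DHxi).
  exact: (Gpm_lower_bound_bounded Hip Hcomplete HA HS Heps A_coercive HBlin HClin HCbound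
    hB hG DHxi).
Qed.
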